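(* Let $\pi$ be a matching and $p>0$ an integer. Then $A_\pi(-p)$ is an integer.
   Context: A matching of size $n$ is a set of $n$ disjoint noncrossing pairs (arches) partitioning $\{1,\dots,2n\}$. For $p\ge0$, $(\pi)_p$ denotes the matching of size $n+p$ obtained by surrounding $\pi$ by $p$ nested arches: its arches are $\{i,2n+2p+1-i\}$ for $1\le i\le p$ and $\{p+i,p+j\}$ for $\{i,j\}\in\pi$. A Fully Packed Loop (FPL) configuration of size $n$ is a subgraph of the $n\times n$ square grid (with $n^2$ vertices), together with external edges: the boundary of the grid carries $4n$ external edges ($n$ on each side), and exactly every second one of them, alternating around the boundary, is selected, the topmost external edge on the left side being selected; the FPL contains the selected external edges and every grid vertex has degree exactly $2$. The $2n$ selected external edges, numbered $1,\dots,2n$ counterclockwise, are linked in pairs by paths of the configuration, defining a matching $\pi(F)$. $A_\pi$ is the number of FPLs $F$ of size $n$ with $\pi(F)=\pi$. It is known that there is a unique polynomial $A_\pi(t)\in\mathbb{Q}[t]$ with $A_\pi(p)=A_{(\pi)_p}$ for all integers $p\ge0$; it has degree $d(\pi)$, the number of boxes of the Young diagram of $\pi$ (if $a_1<\dots<a_n$ are the smaller elements of the arches of $\pi$, $d(\pi)=\sum_i(a_i-i)$). *)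

From HB Require Import structures.
From mathcomp Require Import all_boot all_order all_algebra.
Set Implicit Arguments. Unset Strict Implicit. Unset Printing Implicit Defensive.
Import Order.TTheory GRing.Theory Num.Theory.

(* ---------- Matchings ----------
   A matching of size n is encoded as a function pi : nat -> nat, of which
   only the values on {0,...,2n-1} matter (positions are 0-indexed: the
   paper's point k is our k-1).  pi maps each point to its partner. *)
Definition is_matching (n : nat) (pi : nat -> nat) : Prop :=
  (forall i, i < 2 * n -> pi i < 2 * n /\ pi i <> i /\ pi (pi i) = i) /\
  (* noncrossing: an arch {a, pi a} with a < pi a encloses only arches *)
  (forall a b, a < 2 * n -> a < b < pi a -> a < pi b < pi a).

(* (pi)_p : surround pi (of size n) by p nested arches; size n + p. *)
Definition nest (n p : nat) (pi : nat -> nat) (x : nat) : nat :=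
  if x < p then 2 * n + 2 * p - 1 - x
  else if x < p + 2 * n then p + pi (x - p)
  else 2 * n + 2 * p - 1 - x.

(* ---------- Fully packed loops ----------
   Grid vertices: (row, column) in 'I_n * 'I_n, row 0 on top, column 0 on the
   left.  An internal edge is encoded by (v, b): if b the horizontal edge
   from v = (r,c) to (r,c+1), otherwise the vertical edge from (r,c) to
   (r+1,c).  *)
Definition vertex n := ('I_n * 'I_n)%type.
Definition edge n := (vertex n * bool)%type.

Definition vcoord n (v : vertex n) : nat * nat := (nat_of_ord v.1, nat_of_ord v.2).

Definition other_end n (e : edge n) : nat * nat :=
  if e.2 then ((e.1.1 : nat), (e.1.2 : nat).+1) else ((e.1.1 : nat).+1, (e.1.2 : nat)).

Definition valid_edge n (e : edge n) : bool :=
  ((other_end e).1 < n) && ((other_end e).2 < n).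

Definition incident n (e : edge n) (w : vertex n) : bool :=
  (e.1 == w) || (other_end e == vcoord w).

(* External edges: 4n of them, indexed k = 0..4n-1 counterclockwise starting
   from the topmost one on the left side: left side top to bottom, bottom
   side left to right, right side bottom to top, top side right to left.
   attach n k is the (row, column) of the grid vertex it is attached to. *)
Definition attach (n k : nat) : nat * nat :=
  if k < n then (k, 0)
  else if k < 2 * n then (n - 1, k - n)
  else if k < 3 * n then (3 * n - 1 - k, n - 1)
  else (0, 4 * n - 1 - k).

(* Selected external edges are those of even index k = 2i (the topmost one
   on the left, k = 0, is selected); the selected edge 2i receives label i
   (0-indexed, i.e. label i+1 in the paper). *)
Definition attached n (i : 'I_(2 * n)) (w : vertex n) : bool :=
  attach n (2 * i) == vcoord w.

Definition degree n (F : {set edge n}) (w : vertex n) : nat :=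
  #|[set e in F | incident e w]| + #|[set i : 'I_(2 * n) | attached i w]|.

Definition is_fpl n (F : {set edge n}) : bool :=
  [forall e in F, valid_edge e] && [forall w : vertex n, degree F w == 2].

Definition fpl_rel n (F : {set edge n}) : rel (vertex n) :=
  fun u w => [exists e in F,
    ((e.1 == u) && (other_end e == vcoord w)) ||
    ((e.1 == w) && (other_end e == vcoord u))].

Definition linked n (F : {set edge n}) (i j : 'I_(2 * n)) : bool :=
  [exists u : vertex n, exists w : vertex n,
     [&& attached i u, attached j w & connect (fpl_rel F) u w]].

Definition has_matching n (F : {set edge n}) (pi : nat -> nat) : bool :=
  [forall i : 'I_(2 * n), forall j : 'I_(2 * n),
     (pi i == j) == ((i != j) && linked F i j)].

Definition A (n : nat) (pi : nat -> nat) : nat :=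
  #|[set F : {set edge n} | is_fpl F && has_matching F pi]|.

(* An integer-valued polynomial stays integer-valued when its argument is moved
   one step down: P(x - 1) = P(x) - (Delta P)(x - 1), where the forward
   difference Delta P has smaller degree and is integer-valued on the naturals
   whenever P is.  Induction on the degree then gives integrality at every
   negative integer, in particular at -p where P(-p) = A_pi(-p). *)
From HB Require Import structures.
From mathcomp Require Import all_boot all_order all_algebra.
Import Order.TTheory GRing.Theory Num.Theory.
Local Open Scope ring_scope.

Section ForwardDifference.

Variable R : idomainType.
Implicit Types (P : {poly R}) (x : R).

Definition fdiff P : {poly R} := P \Po ('X + 1%:P) - P.

Definition int_valued_at P x : Prop := exists z : int, P.[x] = z%:~R.

Lemma horner_fdiff P x : (fdiff P).[x] = P.[x + 1] - P.[x].
Proof. by rewrite hornerD hornerN horner_comp hornerD hornerX hornerC. Qed.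

Lemma size_fdiff P : P != 0 -> (size (fdiff P) < size P)%N.
Proof.
move=> nzP; have size_gt0 : (0 < size P)%N by rewrite size_poly_gt0.
have size_shift : size (P \Po ('X + 1%:P)) = size P.
  by rewrite size_comp_poly2 // size_XaddC.
have lead_shift : lead_coef (P \Po ('X + 1%:P)) = lead_coef P.
  by rewrite lead_coef_comp ?size_XaddC // lead_coefXaddC expr1n mulr1.
rewrite -(prednK size_gt0) ltnS; apply/leq_sizeP => j le_j.
rewrite coefB; case: (ltnP (size P).-1 j) => [lt_j | ge_j].
  by rewrite !nth_default ?subr0 ?size_shift // -(prednK size_gt0).
have -> : j = (size P).-1 by apply/eqP; rewrite eqn_leq le_j ge_j.
by rewrite -{1}size_shift -!lead_coefE lead_shift subrr.
Qed.

Lemma fdiff_int_valued_nat P :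
  (forall m : nat, int_valued_at P m%:R) ->
  forall m : nat, int_valued_at (fdiff P) m%:R.
Proof.
move=> intP m; have [a Pa] := intP m.+1; have [b Pb] := intP m.
by exists (a - b); rewrite horner_fdiff natr1 Pa Pb intrB.
Qed.

Lemma int_valued_neg_fdiff P :
  int_valued_at P 0 ->
  (forall m : nat, int_valued_at (fdiff P) (- m%:R)) ->
  forall m : nat, int_valued_at P (- m%:R).
Proof.
move=> intP0 intDP; elim=> [|m [a Pa]]; first by rewrite oppr0.
have [b DPb] := intDP m.+1; exists (a - b).
have shift : - (m.+1)%:R + 1 = - m%:R :> R by rewrite -natr1 opprD addrNK.
by rewrite intrB -Pa -DPb horner_fdiff shift opprB addrC subrK.
Qed.

Lemma int_valued_nat_neg P :
  (forall m : nat, int_valued_at P m%:R) ->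
  forall m : nat, int_valued_at P (- m%:R).
Proof.
have [k] := ubnP (size P); elim: k P => // k IH P size_lt intP.
have [-> m|nzP] := eqVneq P 0; first by exists 0; rewrite horner0.
apply: int_valued_neg_fdiff; first exact: intP 0%N.
apply: IH; last exact: fdiff_int_valued_nat.
exact: leq_trans (size_fdiff P nzP) size_lt.
Qed.

End ForwardDifference.

Theorem proposition3p4 (n : nat) (pi : nat -> nat) (P : {poly rat}) :
  is_matching n pi ->
  (forall p : nat, P.[p%:R] = (A (n + p) (nest n p pi))%:R) ->
  forall p : nat, (0 < p)%N -> exists z : int, P.[- p%:R] = z%:~R.
Proof.
move=> _ P_counts p _; apply: int_valued_nat_neg => m.
by exists (A (n + m) (nest n m pi))%:Z; rewrite P_counts.
Qed.
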